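(* For every base $\mathcal{B}$, atomic multisets $L,K$ and ILL formulae $\varphi,\psi$: if $\Vdash^L_{\mathcal{B}}!\varphi$ and $!\varphi\Vdash^K_{\mathcal{B}}\psi$, then $\Vdash^{L,K}_{\mathcal{B}}\psi$.
   Context: Fix a set $\mathbb{A}$ of propositional atoms. ILL formulae: $\phi ::= p\in\mathbb{A} \mid \top \mid 0 \mid 1 \mid \phi\multimap\phi \mid \phi\otimes\phi \mid \phi\,\&\,\phi \mid \phi\oplus\phi \mid\ !\phi$. All multisets are finite; ''$\Gamma,\Delta$'' denotes multiset union. Atomic rules and bases: an atomic sequent is $P\Rightarrow p$ with $P$ a multiset of atoms, $p$ an atom. An atomic box is a multiset of atomic sequents. An atomic rule is a triple $\langle\mathbf{A},\mathbf{S},p\rangle$ with $\mathbf{A}$ a multiset of atomic boxes, $\mathbf{S}$ an atomic box, $p$ an atom. A base is a set of atomic rules. An atom $p$ is persistent in $\mathcal{B}$ if some $\langle\varnothing,\mathbf{S},p\rangle\in\mathcal{B}$ has $\mathbf{S}\neq\varnothing$. Derivability $\vdash_{\mathcal{B}}$: (Ref) $p\vdash_{\mathcal{B}}p$; (App) if $\langle\mathbf{A},\mathbf{S},p\rangle\in\mathcal{B}$ with $\mathbf{A}=\{\mathbf{T}_1,\dots,\mathbf{T}_m\}$, and there are atomic multisets $C_1,\dots,C_n$ ($n\ge m$) and a multiset $D=\{d_{m+1},\dots,d_n\}$ of atoms persistent in $\mathcal{B}$ such that $C_i,Q\vdash_{\mathcal{B}}q$ for every $i\le m$ and every $Q\Rightarrow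 q\in\mathbf{T}_i$, $C_j\vdash_{\mathcal{B}}d_j$ for every $m<j\le n$, and $D,U\vdash_{\mathcal{B}}v$ for every $U\Rightarrow v\in\mathbf{S}$, then $C_1,\dots,C_n\vdash_{\mathcal{B}}p$. Support $\Vdash^L_{\mathcal{B}}$ (base $\mathcal{B}$, atomic multiset $L$), by induction on formulae: $\Vdash^L_{\mathcal{B}}p$ iff $L\vdash_{\mathcal{B}}p$; $\Vdash^L_{\mathcal{B}}\varphi\multimap\psi$ iff $\varphi\Vdash^L_{\mathcal{B}}\psi$; $\Vdash^L_{\mathcal{B}}\varphi\otimes\psi$ iff for all $\mathcal{C}\supseteq\mathcal{B}$, atomic $K$, atoms $p$: if $\varphi,\psi\Vdash^K_{\mathcal{C}}p$ then $\Vdash^{L,K}_{\mathcal{C}}p$; $\Vdash^L_{\mathcal{B}}1$ iff for all $\mathcal{C}\supseteq\mathcal{B}$, $K$, $p$: if $\Vdash^K_{\mathcal{C}}p$ then $\Vdash^{L,K}_{\mathcal{C}}p$; $\Vdash^L_{\mathcal{B}}\varphi\&\psi$ iff $\Vdash^L_{\mathcal{B}}\varphi$ and $\Vdash^L_{\mathcal{B}}\psi$; $\Vdash^L_{\mathcal{B}}\varphi\oplus\psi$ iff for all $\mathcal{C}\supseteq\mathcal{B}$, $K$, $p$: if $\varphi\Vdash^K_{\mathcal{C}}p$ and $\psi\Vdash^K_{\mathcal{C}}p$ then $\Vdash^{L,K}_{\mathcal{C}}p$; $\Vdash^L_{\mathcal{B}}0$ iff $\Vdash^{L,K}_{\mathcal{B}}p$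 for all atoms $p$ and atomic $K$; $\Vdash^L_{\mathcal{B}}\top$ always; $\Vdash^L_{\mathcal{B}}!\varphi$ iff for all $\mathcal{C}\supseteq\mathcal{B}$, $K$, $p$: if (for all $\mathcal{D}\supseteq\mathcal{C}$, $\Vdash^{\varnothing}_{\mathcal{D}}\varphi$ implies $\Vdash^K_{\mathcal{D}}p$) then $\Vdash^{L,K}_{\mathcal{C}}p$. For nonempty multisets: $\Vdash^L_{\mathcal{B}}\Gamma,\Delta$ iff $L=K,M$ with $\Vdash^K_{\mathcal{B}}\Gamma$ and $\Vdash^M_{\mathcal{B}}\Delta$. For a nonempty antecedent written $!\Delta,\Theta$, where $!\Delta$ collects the formulae with top-level connective $!$ (with $\Delta$ the formulae under those $!$) and $\Theta$ contains none: $!\Delta,\Theta\Vdash^L_{\mathcal{B}}\varphi$ iff for all $\mathcal{C}\supseteq\mathcal{B}$ and atomic $K$, if $\Vdash^{\varnothing}_{\mathcal{C}}\delta$ for every $\delta\in\Delta$ and $\Vdash^K_{\mathcal{C}}\Theta$ then $\Vdash^{L,K}_{\mathcal{C}}\varphi$ (when $\Theta$ is empty, $K$ is empty). An empty antecedent: $\varnothing\Vdash^L_{\mathcal{B}}\varphi$ means $\Vdash^L_{\mathcal{B}}\varphi$. *)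

From Stdlib Require Import List Permutation.
Import ListNotations.
Set Implicit Arguments.

Section Defs.
Variable A : Type.

Inductive form : Type :=
| Atom : A -> form
| Top : form
| Zero : form
| One : form
| Lolli : form -> form -> form
| Tensor : form -> form -> form
| With : form -> form -> form
| Plus : form -> form -> form
| Bang : form -> form.

(* Finite multisets are represented by lists, taken up to permutation. *)
Definition aseq := (list A * A)%type.
Definition box := list aseq.
Definition rule := (list box * box * A)%type.
Definition base := rule -> Prop.

Definition subbase (B C : base) : Prop := forall r, B r -> C r.

Definition persistent (B : base) (p : A) : Prop :=
  exists S : box, S <> [] /\ B ([], S, p).

(* Derivability  L |-_B p.  In (App), [Ts] pairs each box T_i of the rule's
   premiss multiset with its context C_i (i <= m), and [Ps] pairs each
   persistent atom d_j with its context C_j (m < j <= n). *)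
Inductive derives (B : base) : list A -> A -> Prop :=
| d_ref : forall p, derives B [p] p
| d_app : forall (Abx : list box) (S : box) (p : A)
            (Ts : list (box * list A)) (Ps : list (list A * A)) (L : list A),
    B (Abx, S, p) ->
    Permutation Abx (map fst Ts) ->
    (forall T C, In (T, C) Ts -> forall Q q, In (Q, q) T -> derives B (C ++ Q) q) ->
    (forall C d, In (C, d) Ps -> persistent B d /\ derives B C d) ->
    (forall U v, In (U, v) S -> derives B (map snd Ps ++ U) v) ->
    Permutation L (concat (map snd Ts) ++ concat (map fst Ps)) ->
    derives B L p.

(* An antecedent formula, already interpreted: a formula !d contributes the
   requirement  ||-^{empty}_C d ; any other formula t contributes ||-^K_C t. *)
Inductive hyp : Type :=
| HBang : (base -> Prop) -> hyp
| HPlain : (base -> list A -> Prop) -> hyp.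

Definition bangs (G : list hyp) : list (base -> Prop) :=
  flat_map (fun h => match h with HBang P => [P] | HPlain _ => [] end) G.
Definition plains (G : list hyp) : list (base -> list A -> Prop) :=
  flat_map (fun h => match h with HBang _ => [] | HPlain P => [P] end) G.

(* ||-^K_C Theta for the (non-!) part Theta; empty Theta forces K empty. *)
Fixpoint ctx_supp (Th : list (base -> list A -> Prop)) (C : base) (K : list A) : Prop :=
  match Th with
  | [] => K = []
  | [P] => P C K
  | P :: Th' => exists K1 K2, Permutation K (K1 ++ K2) /\ P C K1 /\ ctx_supp Th' C K2
  end.

Definition ante (G : list hyp) (B : base) (L : list A)
  (concl : base -> list A -> Prop) : Prop :=
  forall C : base, subbase B C -> forall K : list A,
    (forall P, In P (bangs G) -> P C) ->
    ctx_supp (plains G) C K ->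
    concl C (L ++ K).

Fixpoint supp (phi : form) : base -> list A -> Prop :=
  match phi with
  | Atom p => fun B L => derives B L p
  | Top => fun _ _ => True
  | Zero => fun B L => forall (p : A) (K : list A), derives B (L ++ K) p
  | One => fun B L => forall (C : base) (K : list A) (p : A),
      subbase B C -> derives C K p -> derives C (L ++ K) p
  | Lolli f g => fun B L =>
      ante [ match f with Bang d => HBang (fun C => supp d C []) | _ => HPlain (supp f) end ]
           B L (supp g)
  | Tensor f g => fun B L => forall (C : base) (K : list A) (p : A),
      subbase B C ->
      ante [ match f with Bang d => HBang (fun C => supp d C []) | _ => HPlain (supp f) end ;
             match g with Bang d => HBang (fun C => supp d C []) | _ => HPlain (supp g) end ]
           C K (fun C' M => derives C' M p) ->
      derives C (L ++ K) p
  | With f g => fun B L => supp f B L /\ supp g B L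
  | Plus f g => fun B L => forall (C : base) (K : list A) (p : A),
      subbase B C ->
      ante [ match f with Bang d => HBang (fun C => supp d C []) | _ => HPlain (supp f) end ]
           C K (fun C' M => derives C' M p) ->
      ante [ match g with Bang d => HBang (fun C => supp d C []) | _ => HPlain (supp g) end ]
           C K (fun C' M => derives C' M p) ->
      derives C (L ++ K) p
  | Bang f => fun B L => forall (C : base) (K : list A) (p : A),
      subbase B C ->
      (forall D : base, subbase C D -> supp f D [] -> derives D K p) ->
      derives C (L ++ K) p
  end.

Definition hypof (f : form) : hyp :=
  match f with Bang d => HBang (fun C => supp d C []) | _ => HPlain (supp f) end.

Definition sequent (G : list form) (B : base) (L : list A) (psi : form) : Prop :=
  match G with
  | [] => supp psi B L
  | _ => ante (map hypof G) B L (supp psi)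
  end.

End Defs.

Arguments Top {A}. Arguments Zero {A}. Arguments One {A}.

(* The clause for [!phi] only eliminates into atoms: given [||-^L_B !phi], an
   atom [p] that is supported by [K] on every extension supporting [phi] is
   supported by [L, K].  This extends to an arbitrary conclusion [psi] by
   induction on [psi]: the clauses of 0, 1, tensor, plus and ! are themselves
   atomic conclusions quantified over extensions, so the clause of [!phi]
   applies to them directly, while & and -o reduce to their subformulae,
   using that support is preserved by base extension.  The sequent
   [!phi ||-^K_B psi] provides exactly the required hypothesis. *)

From Stdlib Require Import List Permutation.
Import ListNotations.
Set Implicit Arguments.

Section Support.
Variable A : Type.

Lemma subbase_refl (B : base A) : subbase B B.
Proof. intros r; auto. Qed.

Lemma subbase_trans (B C D : base A) : subbase B C -> subbase C D -> subbase B D.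
Proof. intros HBC HCD r Hr; auto. Qed.

(* Structural recursion rather than [induction]: the premisses on persistent
   atoms sit under a conjunction, for which the generated principle gives no
   induction hypothesis. *)
Lemma derives_mono (B C : base A) :
  subbase B C -> forall L p, derives B L p -> derives C L p.
Proof.
  intros HBC. fix IH 3. intros L p Hd.
  destruct Hd as [p|Abx S p Ts Ps L HB Hperm HT HP HS HL].
  - constructor.
  - apply (@d_app A C Abx S p Ts Ps L); [exact (HBC _ HB) | exact Hperm | | | | exact HL].
    + intros T C0 HinT Q q Hin. exact (IH _ _ (HT T C0 HinT Q q Hin)).
    + intros C0 d Hin. destruct (HP C0 d Hin) as [[S' [Hne HS']] Hd].
      split; [exists S'; auto | exact (IH _ _ Hd)].
    + intros U v Hin. exact (IH _ _ (HS U v Hin)).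
Qed.

Lemma ante_mono G (B C : base A) L (c : base A -> list A -> Prop) :
  subbase B C -> ante G B L c -> ante G C L c.
Proof. intros HBC H D HCD. exact (H D (subbase_trans HBC HCD)). Qed.

Lemma supp_mono (f : form A) (B C : base A) L :
  subbase B C -> supp f B L -> supp f C L.
Proof.
  revert B C L.
  induction f as [q| | | |f1 _ f2 _|f1 _ f2 _|f1 IH1 f2 IH2|f1 _ f2 _|f _];
    intros B C L HBC H; simpl in H |- *.
  - exact (derives_mono HBC H).
  - exact I.
  - intros p K. exact (derives_mono HBC (H p K)).
  - intros D K p HCD. apply H, (subbase_trans HBC HCD).
  - exact (ante_mono HBC H).
  - intros D K p HCD. apply H, (subbase_trans HBC HCD).
  - destruct H as [H1 H2]. split; [exact (IH1 _ _ _ HBC H1) | exact (IH2 _ _ _ HBC H2)].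
  - intros D K p HCD. apply H, (subbase_trans HBC HCD).
  - intros D K p HCD. apply H, (subbase_trans HBC HCD).
Qed.

Lemma hypof_mono (f : form A) (C D : base A) M :
  subbase C D ->
  (forall P, In P (bangs [hypof f]) -> P C) ->
  ctx_supp (plains [hypof f]) C M ->
  (forall P, In P (bangs [hypof f]) -> P D) /\ ctx_supp (plains [hypof f]) D M.
Proof.
  intros HCD Hbangs Hplains.
  destruct f; cbn [hypof bangs plains flat_map app In ctx_supp] in *;
    try (split; [intros P [] | exact (supp_mono _ _ HCD Hplains)]).
  split; [intros P [<- | []] | exact Hplains].
  exact (supp_mono _ _ HCD (Hbangs _ (or_introl eq_refl))).
Qed.

Lemma supp_bang_elim (phi psi : form A) (B : base A) (L K : list A) :
  supp (Bang phi) B L ->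
  (forall C, subbase B C -> supp phi C [] -> supp psi C K) ->
  supp psi B (L ++ K).
Proof.
  revert B L K.
  induction psi as [q| | | |psi1 _ psi2 IH2|psi1 _ psi2 _|psi1 IH1 psi2 IH2|psi1 _ psi2 _|psi1 _];
    intros B L K Hbang H; simpl in Hbang |- *.
  - apply Hbang; [apply subbase_refl | exact H].
  - exact I.
  - intros p M. rewrite <- app_assoc.
    apply Hbang; [apply subbase_refl |]. intros D HBD Hphi. exact (H D HBD Hphi p M).
  - intros C M p HBC Hp. rewrite <- app_assoc. apply Hbang; [exact HBC |].
    intros D HCD Hphi.
    apply (H D (subbase_trans HBC HCD) Hphi D M p (subbase_refl D)).
    exact (derives_mono HCD Hp).
  - intros C HBC M Hbangs Hplains. rewrite <- app_assoc. apply IH2.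
    + exact (supp_mono (Bang phi) _ HBC Hbang).
    + intros D HCD Hphi.
      destruct (hypof_mono psi1 M HCD Hbangs Hplains) as [Hbangs' Hplains'].
      exact (H D (subbase_trans HBC HCD) Hphi D (subbase_refl D) M Hbangs' Hplains').
  - intros C M p HBC Hp. rewrite <- app_assoc. apply Hbang; [exact HBC |].
    intros D HCD Hphi.
    exact (H D (subbase_trans HBC HCD) Hphi D M p (subbase_refl D) (ante_mono HCD Hp)).
  - split; [apply IH1 | apply IH2]; auto; intros C HBC Hphi; apply (H C HBC Hphi).
  - intros C M p HBC Hp1 Hp2. rewrite <- app_assoc. apply Hbang; [exact HBC |].
    intros D HCD Hphi.
    exact (H D (subbase_trans HBC HCD) Hphi D M p (subbase_refl D)
             (ante_mono HCD Hp1) (ante_mono HCD Hp2)).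
  - intros C M p HBC Hp. rewrite <- app_assoc. apply Hbang; [exact HBC |].
    intros D HCD Hphi.
    apply (H D (subbase_trans HBC HCD) Hphi D M p (subbase_refl D)).
    intros E HDE. apply Hp, (subbase_trans HCD HDE).
Qed.

End Support.

Theorem lemma10 (A : Type) (B : base A) (L K : list A) (phi psi : form A) :
  supp (Bang phi) B L ->
  sequent [Bang phi] B K psi ->
  supp psi B (L ++ K).
Proof.
  intros Hbang Hseq. apply supp_bang_elim with phi; [exact Hbang |].
  intros C HBC Hphi. rewrite <- (app_nil_r K).
  apply Hseq; [exact HBC | | reflexivity].
  intros P [<- | []]. exact Hphi.
Qed.
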